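(* Let $G=(V,E)$ be a finite graph with special vertex $i$, symmetric edge weights $w_E$ (with $w_E(u,v)=0$ for $uv\notin E$) and vertex weights $w_V$ (nonnegative, not identically zero). If $G$ and $G-i$ are each positively connected, then the largest eigenvalue of $L_i^{-1}W_{V,i}$ is simple. Equivalently, up to multiplication by $-1$, the solution of $$\min_{\|g\|_w=1,\ g(i)=0}\ \sum_{jk\in E} w_E(j,k)\,(g(k)-g(j))^2$$ is unique.
   Context: $\|g\|_w=\sqrt{\sum_{u\in V}w_V(u)g(u)^2}$; each edge is counted once. $L=D-W_E$ is the weighted Laplacian, with $W_E=(w_E(u,v))$ and $D$ diagonal with $d(k)=\sum_j w_E(k,j)$; $L_i$ is $L$ with row and column $i$ deleted (invertible under the hypotheses); $W_{V,i}$ is the diagonal matrix of vertex weights with row and column $i$ deleted. A weighted graph is positively connected if any two vertices are joined by a path of positive-weight edges; $G-i$ is $G$ with $i$ deleted. *)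

From HB Require Import structures.
From mathcomp Require Import all_boot all_order all_algebra.
Set Implicit Arguments. Unset Strict Implicit. Unset Printing Implicit Defensive.
Import Order.TTheory GRing.Theory Num.Theory.
Local Open Scope ring_scope.

(* Vertex set V = 'I_n.+1; edge weights given by a matrix WE (WE u v = w_E(u,v),
   zero for non-edges); vertex weights wV : 'I_n.+1 -> R. *)

Section Defs.
Variable R : rcfType.

Definition laplacian (m : nat) (WE : 'M[R]_m) : 'M[R]_m :=
  diag_mx (\row_k (\sum_j WE k j)) - WE.

Definition lap_del (n : nat) (WE : 'M[R]_n.+1) (i : 'I_n.+1) : 'M[R]_n :=
  \matrix_(j, k) laplacian WE (lift i j) (lift i k).

Definition wV_del (n : nat) (wV : 'I_n.+1 -> R) (i : 'I_n.+1) : 'M[R]_n :=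
  diag_mx (\row_j wV (lift i j)).

Definition pos_connected (T : finType) (w : T -> T -> R) : Prop :=
  forall u v : T, connect (fun a b => 0 < w a b) u v.

Definition del_weights (n : nat) (WE : 'M[R]_n.+1) (i : 'I_n.+1) : 'I_n -> 'I_n -> R :=
  fun a b => WE (lift i a) (lift i b).

Definition wnorm2 (n : nat) (wV : 'I_n.+1 -> R) (g : 'I_n.+1 -> R) : R :=
  \sum_u wV u * g u ^+ 2.

Definition energy (n : nat) (WE : 'M[R]_n.+1) (g : 'I_n.+1 -> R) : R :=
  \sum_(j : 'I_n.+1) \sum_(k : 'I_n.+1 | (j < k)%N) WE j k * (g k - g j) ^+ 2.

Definition feasible (n : nat) (wV : 'I_n.+1 -> R) (i : 'I_n.+1) (g : 'I_n.+1 -> R) : Prop :=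
  wnorm2 wV g = 1 /\ g i = 0.

Definition is_minimizer (n : nat) (WE : 'M[R]_n.+1) (wV : 'I_n.+1 -> R) (i : 'I_n.+1)
  (g : 'I_n.+1 -> R) : Prop :=
  feasible wV i g /\ forall h, feasible wV i h -> energy WE g <= energy WE h.

End Defs.

From HB Require Import structures.
From mathcomp Require Import all_boot all_order all_algebra.
From mathcomp Require Import ring complex.
From Stdlib Require Import FunctionalExtensionality.
Set Implicit Arguments. Unset Strict Implicit. Unset Printing Implicit Defensive.
Import Order.TTheory GRing.Theory Num.Theory.
Local Open Scope ring_scope.

(* Since G is connected, the grounded Laplacian L_i is positive definite, so the problem is the
   generalized symmetric eigenproblem t W = lam t L_i with W = W_{V,i}: its top eigenvalue lam is
   the maximum of the Rayleigh quotient (t W t^T) / (t L_i t^T), and the minimizers of the energy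
   on the W-unit sphere are the normalized top eigenvectors. The off-diagonal entries of L_i are
   nonpositive, so replacing a top eigenvector t by |t| does not decrease the Rayleigh quotient and
   |t| is again a top eigenvector; its eigen-equation makes its zero set closed under the positive
   edges of G - i, so by connectivity a top eigenvector vanishing at one vertex vanishes
   everywhere. Hence the top eigenspace is a line, and the minimizer is unique up to sign.
   Finally L_i^-1 W is self-adjoint for the inner product of L_i, so it has no Jordan chain at
   lam, which makes lam a simple root of the characteristic polynomial. *)

Section BilinearForm.
Variable R : realFieldType.

Definition bform k (K : 'M[R]_k) (x y : 'rV[R]_k) : R := (x *m K *m y^T) 0 0.

Definition form_minimizer k (K L : 'M[R]_k) (x : 'rV[R]_k) : Prop :=
  bform L x x = 1 /\ forall y, bform L y y = 1 -> bform K x x <= bform K y y.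

Lemma bformDl k (K : 'M[R]_k) x y z : bform K (x + y) z = bform K x z + bform K y z.
Proof. by rewrite /bform !mulmxDl mxE. Qed.

Lemma bformDr k (K : 'M[R]_k) x y z : bform K z (x + y) = bform K z x + bform K z y.
Proof. by rewrite /bform linearD /= mulmxDr mxE. Qed.

Lemma bformZl k (K : 'M[R]_k) a x z : bform K (a *: x) z = a * bform K x z.
Proof. by rewrite /bform -!scalemxAl mxE. Qed.

Lemma bformZr k (K : 'M[R]_k) a x z : bform K z (a *: x) = a * bform K z x.
Proof. by rewrite /bform linearZ /= -scalemxAr mxE. Qed.

Lemma bformBm k (K L : 'M[R]_k) x y : bform (K - L) x y = bform K x y - bform L x y.
Proof. by rewrite /bform mulmxBr mulmxBl !mxE. Qed.

Lemma bformZm k (K : 'M[R]_k) a x y : bform (a *: K) x y = a * bform K x y.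
Proof. by rewrite /bform -scalemxAr -scalemxAl !mxE. Qed.

Lemma bformC k (K : 'M[R]_k) x y : K^T = K -> bform K x y = bform K y x.
Proof.
move=> K_sym; have -> : bform K x y = ((x *m K *m y^T)^T) 0 0 by rewrite [RHS]mxE.
by rewrite !trmx_mul trmxK K_sym mulmxA.
Qed.

Lemma symmetric_mxE k (K : 'M[R]_k) : K^T = K -> forall a b, K a b = K b a.
Proof. by move=> K_sym a b; rewrite -[in LHS]K_sym mxE. Qed.

Lemma bform_sum k (K : 'M[R]_k) x y :
  bform K x y = \sum_a \sum_b x 0 a * K a b * y 0 b.
Proof.
rewrite /bform mxE exchange_big; apply: eq_bigr => b _; rewrite !mxE mulr_suml.
by apply: eq_bigr => a _; rewrite ?mxE.
Qed.

Lemma bform_eigen k (K L : 'M[R]_k) mu x y :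
  x *m K = mu *: (x *m L) -> bform K x y = mu * bform L x y.
Proof. by move=> x_eig; rewrite /bform x_eig -scalemxAl mxE. Qed.

Lemma bform_delta k (K : 'M[R]_k) x j : bform K x (delta_mx 0 j) = (x *m K) 0 j.
Proof.
rewrite /bform mxE (bigD1 j) //= big1 ?addr0 => [|b /negPf bj].
  by rewrite !mxE !eqxx mulr1.
by rewrite !mxE bj andbF mulr0.
Qed.

Lemma bform1_ge0 k (x : 'rV[R]_k) : 0 <= bform 1%:M x x.
Proof. by rewrite /bform mulmx1 mxE sumr_ge0 // => j _; rewrite mxE -expr2 sqr_ge0. Qed.

Lemma quadratic_ge0_discr (a b c : R) : 0 <= c ->
  (forall s, 0 <= a + 2 * s * b + s ^+ 2 * c) -> b ^+ 2 <= a * c.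
Proof.
move=> c_ge0 q_ge0; have [c0|c_neq0] := eqVneq c 0.
  rewrite c0 mulr0; have [->|b_neq0] := eqVneq b 0; first by rewrite expr0n.
  have := q_ge0 (- (a + 1) / (2 * b)); rewrite c0 mulr0 addr0.
  have -> : a + 2 * (- (a + 1) / (2 * b)) * b = -1 by field.
  by rewrite ler0N1.
have c_gt0 : 0 < c by rewrite lt_def c_neq0.
have := q_ge0 (- b / c).
have -> : a + 2 * (- b / c) * b + (- b / c) ^+ 2 * c = a - b ^+ 2 / c by field.
by rewrite subr_ge0 ler_pdivrMr.
Qed.

Lemma bform_normr_le k (K : 'M[R]_k) x :
  (forall a b, a != b -> K a b <= 0) ->
  bform K (map_mx Num.norm x) (map_mx Num.norm x) <= bform K x x.
Proof.
move=> K_offdiag; rewrite !bform_sum; apply: ler_sum => a _; apply: ler_sum => b _.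
rewrite !mxE mulrAC [x 0 a * _ * _]mulrAC -normrM.
have [<-|ab] := eqVneq a b; first by rewrite -expr2 ger0_norm ?sqr_ge0.
by rewrite ler_wnM2r ?K_offdiag ?ler_norm.
Qed.

Lemma bform_diag_normr k (d : 'I_k -> R) x :
  bform (diag_mx (\row_j d j)) (map_mx Num.norm x) (map_mx Num.norm x) =
  bform (diag_mx (\row_j d j)) x x.
Proof.
rewrite !bform_sum; apply: eq_bigr => a _; apply: eq_bigr => b _; rewrite !mxE.
have [<-|_] := eqVneq a b; last by rewrite !mulr0n !mulr0 !mul0r.
by rewrite mulrAC [x 0 a * _ * _]mulrAC -normrM -expr2 ger0_norm ?sqr_ge0.
Qed.

Section SemiDefinite.
Variables (k : nat) (K : 'M[R]_k).
Hypotheses (K_sym : K^T = K) (K_psd : forall x, 0 <= bform K x x).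

Lemma bform_CauchySchwarz x y : bform K x y ^+ 2 <= bform K x x * bform K y y.
Proof.
apply: quadratic_ge0_discr => // s; have := K_psd (x + s *: y).
rewrite !(bformDl, bformDr, bformZl, bformZr) (bformC y x K_sym).
by congr (0 <= _); ring.
Qed.

Lemma bform_eq0_mulmx x : bform K x x = 0 -> x *m K = 0.
Proof.
move=> x0; apply/rowP => j; rewrite -bform_delta [RHS]mxE.
have := bform_CauchySchwarz x (delta_mx 0 j); rewrite x0 mul0r => cs.
by apply/eqP; rewrite -sqrf_eq0 eq_le cs sqr_ge0.
Qed.

End SemiDefinite.

Section Definite.
Variables (k : nat) (K : 'M[R]_k).
Hypotheses (K_sym : K^T = K) (K_pd : forall x, x != 0 -> 0 < bform K x x).

Lemma posdef_psd x : 0 <= bform K x x.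
Proof.
have [->|/K_pd/ltW //] := eqVneq x 0.
by rewrite /bform !mul0mx mxE.
Qed.

Lemma posdef_unitmx : K \in unitmx.
Proof.
rewrite -row_free_unit -kermx_eq0; apply: contraT => /rowV0Pn [v /sub_kermxP vK v_nz].
by have := K_pd v_nz; rewrite /bform vK mul0mx mxE ltxx.
Qed.

Lemma bform_invmx z : bform (invmx K) z z = bform K (z *m invmx K) (z *m invmx K).
Proof.
by rewrite /bform trmx_mul trmx_inv K_sym !mulmxA mulmxKV // posdef_unitmx.
Qed.

Lemma posdef_invmx z : z != 0 -> 0 < bform (invmx K) z z.
Proof.
move=> z_nz; rewrite bform_invmx; apply: K_pd; apply: contraNneq z_nz => zK0.
by rewrite -(mulmxKV posdef_unitmx z) zK0 mul0mx.
Qed.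

End Definite.

End BilinearForm.


Section RealSymmetric.
Variable R : rcfType.
Local Notation C := R[i].
Local Notation toC := (real_complex R).
Local Open Scope sesquilinear_scope.

Lemma map_Re_mulmx m p q (v : 'M[C]_(m, p)) (S : 'M[R]_(p, q)) :
  map_mx (@complex.Re R) (v *m map_mx toC S) = map_mx (@complex.Re R) v *m S.
Proof.
apply/matrixP => a b; rewrite !mxE (raddf_sum (@complex.Re R : Rcomplex R -> R)).
by apply: eq_bigr => j _; rewrite !mxE; case: (v a j) => x y /=; rewrite mulr0 subr0.
Qed.

Lemma map_Im_mulmx m p q (v : 'M[C]_(m, p)) (S : 'M[R]_(p, q)) :
  map_mx (@complex.Im R) (v *m map_mx toC S) = map_mx (@complex.Im R) v *m S.
Proof.
apply/matrixP => a b; rewrite !mxE (raddf_sum (@complex.Im R : Rcomplex R -> R)).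
by apply: eq_bigr => j _; rewrite !mxE; case: (v a j) => x y /=; rewrite mulr0 add0r.
Qed.

Lemma trmxC_real m p (x : 'M[R]_(m, p)) : (map_mx toC x)^t* = map_mx toC x^T.
Proof. by apply/matrixP => a b; rewrite !mxE conj_Creal // complex_real. Qed.

Lemma hermitian_top_eigenvector n (H : 'M[C]_n.+1) : H^t* = H ->
  exists lam : R, exists2 u : 'rV[C]_n.+1, u != 0 /\ u *m H = toC lam *: u &
    forall x : 'rV_n.+1, (x *m H *m x^t*) 0 0 <= toC lam * (x *m x^t*) 0 0.
Proof.
move=> H_adj; have Hherm : H \is hermsymmx.
  by apply/is_hermitianmxP; rewrite expr0 scale1r H_adj.
have /orthomx_spectralP H_eq := hermitian_normalmx Hherm.
set P := spectralmx H in H_eq; set d := spectral_diag H in H_eq.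
have P_unitary : P \is unitarymx := spectral_unitarymx H.
have P_unit : P \in unitmx := unitarymx_unit P_unitary.
have d_real j : d 0 j = toC (complex.Re (d 0 j)).
  by rewrite RRe_real //; move/mxOverP: (hermitian_spectral_diag_real Hherm); apply.
pose k := [arg max_(j > (ord0 : 'I_n.+1)) complex.Re (d 0 j)]%O.
have d_le j : d 0 j <= d 0 k.
  rewrite [d 0 j]d_real [d 0 k]d_real lecR /k.
  by case: arg_maxP => // m _; apply.
exists (complex.Re (d 0 k)); rewrite -d_real; exists (row k P).
  split.
    rewrite rowE mulmx_free_eq0 ?row_free_unit //.
    by apply/eqP => /matrixP/(_ 0 k); rewrite !mxE !eqxx => /eqP; rewrite oner_eq0.
  rewrite H_eq !mulmxA -row_mul mulmxV // row1 mul_mx_diag rowE scalemxAl.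
  congr (_ *m _); apply/rowP => j; rewrite !mxE eqxx /=.
  by case: (eqVneq j k) => [->|_]; rewrite ?mulr1 ?mul1r ?mulr0 ?mul0r.
move=> x; rewrite H_eq invmx_unitary // !mulmxA.
set y := x *m P^t*; rewrite -(mulmxA _ P).
have -> : P *m x^t* = y^t* by rewrite /y trmx_mul map_mxM trmxCK.
have -> : x *m x^t* = y *m y^t*.
  by rewrite /y trmx_mul map_mxM trmxCK mulmxA -(mulmxA x) -invmx_unitary // mulVmx // mulmx1.
rewrite mul_mx_diag !mxE mulr_sumr; apply: ler_sum => j _; rewrite !mxE.
rewrite mulrAC [d 0 k * _]mulrC; apply: ler_wpM2l => //.
by rewrite mul_conjC_ge0.
Qed.

Lemma symmetric_top_eigenvector n (S : 'M[R]_n.+1) : S^T = S ->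
  exists lam (y : 'rV[R]_n.+1), [/\ y != 0, y *m S = lam *: y &
     forall x, bform S x x <= lam * bform 1%:M x x].
Proof.
move=> S_sym; have [|lam [u [u_nz uS] rayleigh]] := @hermitian_top_eigenvector _ (map_mx toC S).
  by rewrite trmxC_real S_sym.
exists lam.
have ReS : map_mx (@complex.Re R) u *m S = lam *: map_mx (@complex.Re R) u.
  rewrite -map_Re_mulmx uS; apply/rowP => j; rewrite !mxE.
  by case: (u 0 j) => a b /=; rewrite mul0r subr0.
have ImS : map_mx (@complex.Im R) u *m S = lam *: map_mx (@complex.Im R) u.
  rewrite -map_Im_mulmx uS; apply/rowP => j; rewrite !mxE.
  by case: (u 0 j) => a b /=; rewrite mul0r addr0.
have realS x : bform S x x <= lam * bform 1%:M x x.
  have := rayleigh (map_mx toC x); rewrite /bform mulmx1 trmxC_real -!map_mxM !mxE.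
  by rewrite -rmorphM lecR.
have [Re0|] := eqVneq (map_mx (@complex.Re R) u) 0; last by exists (map_mx (@complex.Re R) u).
have [Im0|] := eqVneq (map_mx (@complex.Im R) u) 0; last by exists (map_mx (@complex.Im R) u).
case/eqP: u_nz; apply/rowP => j.
move/rowP/(_ j): Re0; move/rowP/(_ j): Im0; rewrite !mxE.
by case: (u 0 j) => a b /= -> ->.
Qed.
End RealSymmetric.


Section GeneralizedEigen.
Variable R : rcfType.

(* Cauchy-Schwarz for the form of invmx M, applied to x M and x F F. *)
Lemma bform_sqr_le_of_conj_invmx n (M F : 'M[R]_n) lam :
  M^T = M -> (forall x, x != 0 -> 0 < bform M x x) -> F^T = F -> 0 <= lam ->
  (forall a, bform (F *m invmx M *m F) a a <= lam * bform 1%:M a a) ->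
  forall x, bform (F *m F) x x <= lam * bform M x x.
Proof.
move=> M_sym M_pd F_sym lam_ge0 rayleigh x.
have M_unit := posdef_unitmx M_pd.
have Mi_sym : (invmx M)^T = invmx M by rewrite trmx_inv M_sym.
pose a := x *m F.
have FF : bform (F *m F) x x = bform 1%:M a a by rewrite /bform mulmx1 trmx_mul F_sym !mulmxA.
have cs := bform_CauchySchwarz Mi_sym (posdef_psd (posdef_invmx M_sym M_pd)) (x *m M) (a *m F).
have e1 : bform (invmx M) (x *m M) (a *m F) = bform 1%:M a a.
  by rewrite /bform mulmx1 (trmx_mul a F) F_sym mulmxK // mulmxA.
have e2 : bform (invmx M) (x *m M) (x *m M) = bform M x x.
  by rewrite /bform !trmx_mul M_sym mulmxK // mulmxA.
have e3 : bform (invmx M) (a *m F) (a *m F) = bform (F *m invmx M *m F) a a.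
  by rewrite /bform trmx_mul F_sym !mulmxA.
rewrite e1 e2 e3 in cs.
rewrite FF; have [a0|a_neq0] := eqVneq (bform 1%:M a a) 0.
  by rewrite a0 mulr_ge0 // posdef_psd.
have a_gt0 : 0 < bform 1%:M a a by rewrite lt_def a_neq0 bform1_ge0.
rewrite -(ler_pM2r a_gt0) -expr2 (le_trans cs) // [lam * _]mulrC -mulrA.
by apply: ler_wpM2l; [exact: posdef_psd | exact: rayleigh].
Qed.

(* With F the square root of diag w, a top eigenvector y of the symmetric F M^-1 F
   yields the top generalized eigenvector y F M^-1. *)
Lemma generalized_top_eigenvector n (M : 'M[R]_n.+1) (w : 'I_n.+1 -> R) :
  M^T = M -> (forall x, x != 0 -> 0 < bform M x x) ->
  (forall j, 0 <= w j) -> (exists j, 0 < w j) ->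
  exists lam (t : 'rV_n.+1), [/\ 0 < lam, t != 0,
     t *m diag_mx (\row_j w j) = lam *: (t *m M) &
     forall x, bform (diag_mx (\row_j w j)) x x <= lam * bform M x x].
Proof.
move=> M_sym M_pd w_ge0 [j0 wj0_gt0].
have M_unit := posdef_unitmx M_pd.
pose F := diag_mx (\row_j Num.sqrt (w j)).
have FF : F *m F = diag_mx (\row_j w j).
  by rewrite mulmx_diag; congr diag_mx; apply/rowP => j; rewrite !mxE -expr2 sqr_sqrtr.
have F_sym : F^T = F by rewrite tr_diag_mx.
pose S := F *m invmx M *m F.
have S_sym : S^T = S by rewrite !trmx_mul F_sym trmx_inv M_sym mulmxA.
have [lam [y [y_nz yS rayleigh]]] := symmetric_top_eigenvector S_sym.
have lam_gt0 : 0 < lam.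
  pose e : 'rV[R]_n.+1 := delta_mx 0 j0.
  have eF : e *m F = Num.sqrt (w j0) *: e.
    apply/rowP => j; rewrite mul_mx_diag !mxE.
    by case: (eqVneq j j0) => [->|]; rewrite ?mulr1 ?mul1r ?mulr0 // andbF mul0r.
  have := rayleigh e; rewrite [bform 1%:M _ _]bform_delta mulmx1 mxE !eqxx mulr1.
  have -> : bform S e e = bform (invmx M) (e *m F) (e *m F).
    by rewrite /bform trmx_mul F_sym !mulmxA.
  rewrite eF bformZl bformZr mulrA -expr2 (sqr_sqrtr (ltW wj0_gt0)) => le_lam.
  apply: (lt_le_trans _ le_lam); rewrite mulr_gt0 // posdef_invmx //.
  by apply/eqP => /rowP/(_ j0); rewrite !mxE !eqxx => /eqP; rewrite oner_eq0.
exists lam, (y *m F *m invmx M); split => //.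
- apply: contraNneq y_nz => t0.
  have yF0 : y *m F = 0 by rewrite -(mulmxKV M_unit (y *m F)) t0 mul0mx.
  have /eqP : lam *: y = 0 by rewrite -yS /S !mulmxA yF0 !mul0mx.
  by rewrite scaler_eq0 (gt_eqF lam_gt0).
- rewrite mulmxKV // -FF.
  have -> : y *m F *m invmx M *m (F *m F) = y *m S *m F by rewrite /S !mulmxA.
  by rewrite yS scalemxAl.
- by rewrite -FF; apply: bform_sqr_le_of_conj_invmx => //; exact: ltW.
Qed.
End GeneralizedEigen.


Section SimpleEigenvalue.
Variable F : fieldType.

Definition insert0 n (k : 'I_n.+1) (y : 'rV[F]_n) : 'rV[F]_n.+1 :=
  \row_b if unlift k b is Some j then y 0 j else 0.

Lemma insert0_id n (k : 'I_n.+1) y : insert0 k y 0 k = 0.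
Proof. by rewrite mxE unlift_none. Qed.

Lemma insert0_lift n (k : 'I_n.+1) y j : insert0 k y 0 (lift k j) = y 0 j.
Proof. by rewrite mxE liftK. Qed.

Lemma insert0N n (k : 'I_n.+1) y : insert0 k (- y) = - insert0 k y.
Proof. by apply/rowP => b; rewrite !mxE; case: unlift => [j|]; rewrite ?mxE ?oppr0. Qed.

Lemma char_poly_conj n (P A : 'M[F]_n) :
  P \in unitmx -> char_poly (P *m A *m invmx P) = char_poly A.
Proof.
move=> P_unit; have PPi : map_mx polyC P *m map_mx polyC (invmx P) = 1%:M.
  by rewrite -map_mxM mulmxV // map_mx1.
rewrite /char_poly; have -> : char_poly_mx (P *m A *m invmx P) =
    map_mx polyC P *m char_poly_mx A *m map_mx polyC (invmx P).
  by rewrite /char_poly_mx mulmxBr mulmxBl scalar_mxC -(mulmxA 'X%:M) PPi mulmx1 -!map_mxM.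
by rewrite !det_mulmx mulrAC -det_mulmx PPi det1 mul1r.
Qed.

Lemma char_poly_row_eigen n (T : 'M[F]_n.+1) k lam :
  row k T = lam *: delta_mx 0 k ->
  char_poly T = ('X - lam%:P) * char_poly (row' k (col' k T)).
Proof.
move=> /rowP Tk; have {}Tk b : T k b = lam * (b == k)%:R.
  by have := Tk b; rewrite !mxE eq_sym.
rewrite /char_poly (expand_det_row _ k) (bigD1 k) //= big1 => [|b /negPf bk].
  rewrite addr0 /cofactor -signr_odd addnn odd_double mul1r.
  by rewrite row'_col'_char_poly_mx !mxE eqxx Tk eqxx mulr1.
by rewrite !mxE Tk bk mulr0 eq_sym bk subr0 mul0r.
Qed.

Lemma row_completion_unitmx n (u : 'rV[F]_n) k : u 0 k != 0 ->
  exists2 P : 'M_n, P \in unitmx & row k P = u.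
Proof.
move=> uk_neq0; pose P : 'M_n := \matrix_(a, b) if a == k then u 0 b else (a == b)%:R.
exists P; last by apply/rowP => b; rewrite !mxE eqxx.
rewrite unitmxE unitfE (expand_det_row _ k) (bigD1 k) //= big1 => [|b bk].
  rewrite addr0 mxE eqxx /cofactor -signr_odd addnn odd_double mul1r.
  have -> : row' k (col' k P) = 1%:M.
    by apply/matrixP => a b; rewrite !mxE eq_sym (negPf (neq_lift k a)) (inj_eq lift_inj).
  by rewrite det1 mulr1.
rewrite eq_sym in bk; have [a -> _] := unlift_some bk.
rewrite /cofactor (expand_det_row _ a) big1 ?mulr0 // => c _.
by rewrite !mxE eq_sym (negPf (neq_lift k a)) (negPf (neq_lift _ c)) mul0r.
Qed.

Lemma insert0_eigen n (T : 'M[F]_n.+1) k lam (y : 'rV_n) :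
  y *m row' k (col' k T) = lam *: y ->
  insert0 k y *m T = lam *: insert0 k y + (insert0 k y *m T) 0 k *: delta_mx 0 k.
Proof.
move=> /rowP yT; have {}yT j : \sum_a y 0 a * T (lift k a) (lift k j) = lam * y 0 j.
  by have := yT j; rewrite !mxE; under eq_bigr do rewrite !mxE.
apply/rowP => b; rewrite !mxE eqxx /=.
case: (unliftP k b) => [j ->|->]; last by rewrite eqxx mulr0 mulr1 add0r.
rewrite eq_sym (negPf (neq_lift k j)) mulr0 addr0 -yT.
rewrite (bigD1_ord k) //= insert0_id mul0r add0r; apply: eq_bigr => a _.
by rewrite insert0_lift.
Qed.

(* Conjugating A so that its row k becomes lam e_k splits off the factor X - lam; a root lam
   of the remaining factor would produce a Jordan chain w A = lam w + c u. *)
Lemma mup_char_poly_eq1 n (A : 'M[F]_n.+1) lam (u : 'rV_n.+1) :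
  u != 0 -> u *m A = lam *: u ->
  (forall (w : 'rV_n.+1) c, w *m A = lam *: w + c *: u ->
      c = 0 /\ exists a, w = a *: u) ->
  mup lam (char_poly A) = 1%N.
Proof.
move=> u_nz uA no_chain; have /rV0Pn [k uk_neq0] := u_nz.
have [P P_unit Pk] := row_completion_unitmx uk_neq0.
pose T := P *m A *m invmx P.
have TP : T *m P = P *m A by rewrite mulmxKV.
have Tk : row k T = lam *: delta_mx 0 k.
  by rewrite !row_mul Pk uA -scalemxAl -Pk -row_mul mulmxV // row1.
rewrite -(char_poly_conj A P_unit) -/T (char_poly_row_eigen Tk) mupMl.
  by rewrite -[X in mup _ X]expr1 mup_XsubCX eqxx.
rewrite -eigenvalue_root_char; apply/eigenvalueP => -[y yT y_nz].
have zT := insert0_eigen yT; set z := insert0 k y in zT; set c := (z *m T) 0 k in zT.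
have [_ [a za]] : c = 0 /\ exists a, z *m P = a *: u.
  by apply: no_chain; rewrite -mulmxA -TP mulmxA zT mulmxDl -!scalemxAl -rowE Pk.
have za' : z = a *: delta_mx 0 k.
  by rewrite -(mulmxK P_unit z) za -Pk rowE scalemxAl mulmxK.
have a0 : a = 0 by have := insert0_id k y; rewrite -/z za' !mxE !eqxx mulr1.
by case/eqP: y_nz; apply/rowP => j; rewrite -(insert0_lift k) -/z za' a0 scale0r !mxE.
Qed.

End SimpleEigenvalue.


Section TopEigenvalue.
Variable R : rcfType.
Variables (n : nat) (M : 'M[R]_n.+1) (d : 'I_n.+1 -> R) (lam : R).
Local Notation D := (diag_mx (\row_j d j)).
Hypotheses (M_sym : M^T = M) (M_pd : forall x, x != 0 -> 0 < bform M x x).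
Hypothesis lam_gt0 : 0 < lam.
Hypothesis rayleigh : forall x, bform D x x <= lam * bform M x x.

Lemma rayleigh_eq_eigen x : bform D x x = lam * bform M x x -> x *m D = lam *: (x *m M).
Proof.
move=> x_eq; pose N := lam *: M - D.
have N_sym : N^T = N by rewrite /N linearB /= linearZ /= M_sym tr_diag_mx.
have N_psd y : 0 <= bform N y y by rewrite bformBm bformZm subr_ge0.
have /eqP : x *m N = 0.
  by apply: (bform_eq0_mulmx N_sym N_psd); rewrite bformBm bformZm x_eq subrr.
by rewrite mulmxBr subr_eq0 -scalemxAr eq_sym => /eqP.
Qed.

Hypothesis M_offdiag : forall a b, a != b -> M a b <= 0.
Hypothesis M_connected : forall a b, connect [rel a b | M a b < 0] a b.

Lemma eigen_zero_closed (s : 'rV[R]_n.+1) : (forall j, 0 <= s 0 j) -> s *m D = lam *: (s *m M) ->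
  closed [rel a b | M a b < 0] [pred j | s 0 j == 0].
Proof.
move=> s_ge0 /rowP s_eig.
have rel_sym : connect_sym [rel a b | M a b < 0].
  by apply: sym_connect_sym => a b /=; rewrite (symmetric_mxE M_sym).
apply: intro_closed => // a b /= Mab /eqP sa0; apply/eqP.
have [<-//|ab] := eqVneq a b.
have /esym/eqP := s_eig a; rewrite mul_mx_diag !mxE sa0 mul0r mulf_eq0 (gt_eqF lam_gt0) /=.
rewrite (bigD1 a) //= sa0 mul0r add0r -oppr_eq0 -sumrN => /eqP/psumr_eq0P sum0.
have /(_ b) : forall c, c != a -> - (s 0 c * M c a) = 0.
  by apply: sum0 => c ca; rewrite -mulrN mulr_ge0 // oppr_ge0 M_offdiag.
rewrite eq_sym ab => /(_ isT) /eqP; rewrite oppr_eq0 mulf_eq0 => /orP [/eqP //|/eqP Mba].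
by move: Mab; rewrite (symmetric_mxE M_sym) Mba ltxx.
Qed.

Lemma top_eigenvector_eq0 (t : 'rV[R]_n.+1) k : t *m D = lam *: (t *m M) -> t 0 k = 0 -> t = 0.
Proof.
move=> t_eig tk0; pose s := map_mx Num.norm t.
(* |t| has the same D-form and no larger M-form, hence it is again a top eigenvector. *)
have s_eig : s *m D = lam *: (s *m M).
  have s_ge : lam * bform M s s <= bform D s s.
    rewrite bform_diag_normr (bform_eigen _ t_eig).
    by apply: ler_wpM2l; [exact: ltW | exact: bform_normr_le].
  by apply: rayleigh_eq_eigen; apply/eqP; rewrite eq_le rayleigh s_ge.
have s_ge0 j : 0 <= s 0 j by rewrite mxE normr_ge0.
have /closed_connect zero_closed := eigen_zero_closed s_ge0 s_eig.
apply/rowP => j; have := zero_closed k j (M_connected k j).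
by rewrite !inE !mxE tk0 normr0 eqxx normr_eq0 => /esym/eqP.
Qed.

Lemma top_eigenspace_line (t0 t : 'rV[R]_n.+1) : t0 != 0 ->
  t0 *m D = lam *: (t0 *m M) -> t *m D = lam *: (t *m M) -> exists a, t = a *: t0.
Proof.
move=> /rV0Pn [k t0k_neq0] t0_eig t_eig.
exists (t 0 k / t0 0 k); apply/eqP; rewrite -subr_eq0; apply/eqP.
apply: (@top_eigenvector_eq0 _ k); last by rewrite !mxE divfK // subrr.
by rewrite !mulmxBl -!scalemxAl t_eig t0_eig scalerBr !scalerA mulrC.
Qed.

Variable t0 : 'rV[R]_n.+1.
Hypotheses (t0_nz : t0 != 0) (t0_eig : t0 *m D = lam *: (t0 *m M)).

Lemma top_eigenvalue_simple (A := invmx M *m D) :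
  [/\ eigenvalue A lam, forall mu, eigenvalue A mu -> mu <= lam & mup lam (char_poly A) = 1%N].
Proof.
have M_unit := posdef_unitmx M_pd.
have invM_eig (v : 'rV_n.+1) mu : v *m A = mu *: v ->
    (v *m invmx M) *m D = mu *: (v *m invmx M *m M).
  by rewrite mulmxKV // mulmxA.
have t0M_nz : t0 *m M != 0.
  by apply: contraNneq t0_nz => t0M0; rewrite -(mulmxK M_unit t0) t0M0 mul0mx.
have t0M_eig : t0 *m M *m A = lam *: (t0 *m M) by rewrite mulmxA mulmxK.
split.
- by apply/eigenvalueP; exists (t0 *m M).
- move=> mu /eigenvalueP [v /invM_eig v_eig v_nz].
  have t_nz : v *m invmx M != 0.
    by apply: contraNneq v_nz => vM0; rewrite -(mulmxKV M_unit v) vM0 mul0mx.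
  have := rayleigh (v *m invmx M); rewrite (bform_eigen _ v_eig).
  by rewrite (ler_pM2r (M_pd t_nz)).
apply: (mup_char_poly_eq1 t0M_nz t0M_eig) => w c w_chain.
pose s := w *m invmx M.
have s_chain : s *m D = lam *: (s *m M) + c *: (t0 *m M) by rewrite mulmxKV // -w_chain mulmxA.
(* A is self-adjoint for the form of M: pairing the chain with t0 cancels the lam terms. *)
have c0 : c = 0.
  have chain_form : bform D s t0 = lam * bform M s t0 + c * bform M t0 t0.
    by rewrite /bform s_chain mulmxDl -!scalemxAl !mxE.
  have : c * bform M t0 t0 = 0.
    apply: (addrI (lam * bform M s t0)); rewrite addr0 -chain_form.
    by rewrite bformC ?tr_diag_mx // (bform_eigen _ t0_eig) bformC.
  by move/eqP; rewrite mulf_eq0 (gt_eqF (M_pd t0_nz)) orbF => /eqP.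
split=> //; move: s_chain; rewrite c0 scale0r addr0 => /(top_eigenspace_line t0_nz t0_eig) [a s_eq].
by exists a; rewrite -(mulmxKV M_unit w) -/s s_eq -scalemxAl.
Qed.

Lemma form_minimizer_unique : exists x0,
  form_minimizer M D x0 /\ forall y, form_minimizer M D y -> y = x0 \/ y = - x0.
Proof.
have q0_gt0 : 0 < bform D t0 t0 by rewrite (bform_eigen _ t0_eig) mulr_gt0 // M_pd.
pose r := Num.sqrt (bform D t0 t0).
have r_gt0 : 0 < r by rewrite sqrtr_gt0.
have D_scale a : bform D (a *: t0) (a *: t0) = a ^+ 2 * bform D t0 t0.
  by rewrite bformZl bformZr mulrA -expr2.
pose x0 := r^-1 *: t0.
have Dx0 : bform D x0 x0 = 1.
  by rewrite D_scale exprVn sqr_sqrtr ?ltW // mulVf // gt_eqF.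
have Mx0 : lam * bform M x0 x0 = 1.
  by rewrite -(bform_eigen _ (_ : x0 *m D = _)) // -!scalemxAl t0_eig scalerA mulrC -scalerA.
have x0_min : form_minimizer M D x0.
  by split=> // y Dy; rewrite -(ler_pM2l lam_gt0) Mx0 -Dy rayleigh.
exists x0; split => // y [Dy y_min].
have y_eq : bform D y y = lam * bform M y y.
  by apply/eqP; rewrite eq_le rayleigh Dy -Mx0 ler_pM2l // y_min.
have [a ya] := top_eigenspace_line t0_nz t0_eig (rayleigh_eq_eigen y_eq); subst y.
have : a ^+ 2 = r^-1 ^+ 2.
  by apply: (mulIf (lt0r_neq0 q0_gt0)); rewrite -!D_scale -/x0 Dx0 Dy.
by move/eqP; rewrite eqf_sqr => /orP [/eqP ->|/eqP ->]; [left | right; rewrite scaleNr].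
Qed.
End TopEigenvalue.


Section Graph.
Variable R : rcfType.
Variables (n : nat) (WE : 'M[R]_n.+1) (i : 'I_n.+1).
Hypotheses (WE_sym : WE^T = WE) (WE_ge0 : forall u v, 0 <= WE u v).

Definition fun_del (g : 'I_n.+1 -> R) : 'rV[R]_n := \row_j g (lift i j).

Lemma insert0_fun_del g : g i = 0 -> insert0 i (fun_del g) 0 = g.
Proof.
move=> gi0; apply: functional_extensionality => v; rewrite mxE.
by case: unliftP => [j ->|->]; rewrite ?mxE.
Qed.

Lemma bform_lap_del x :
  bform (lap_del WE i) x x = bform (laplacian WE) (insert0 i x) (insert0 i x).
Proof.
rewrite !bform_sum (bigD1_ord i) //= [X in _ = X + _]big1 => [|v _]; last first.
  by rewrite insert0_id !mul0r.
rewrite add0r; apply: eq_bigr => a _; rewrite (bigD1_ord i) //= insert0_id mulr0 add0r.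
by apply: eq_bigr => b _; rewrite !insert0_lift !mxE.
Qed.

Lemma bform_laplacian (g : 'rV[R]_n.+1) :
  bform (laplacian WE) g g * 2 = \sum_u \sum_v WE u v * (g 0 v - g 0 u) ^+ 2.
Proof.
have sq_sym : \sum_u \sum_v WE u v * g 0 v ^+ 2 = \sum_u \sum_v WE u v * g 0 u ^+ 2.
  rewrite exchange_big; apply: eq_bigr => u _; apply: eq_bigr => v _.
  by rewrite (symmetric_mxE WE_sym).
have lapE : bform (laplacian WE) g g =
    \sum_u \sum_v (WE u v * g 0 u ^+ 2 - g 0 u * WE u v * g 0 v).
  rewrite bform_sum; apply: eq_bigr => u _.
  have -> : \sum_v g 0 u * laplacian WE u v * g 0 v =
      \sum_v g 0 u * ((\sum_j WE u j) *+ (u == v)) * g 0 v - \sum_v g 0 u * WE u v * g 0 v.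
    by rewrite -sumrB; apply: eq_bigr => v _; rewrite !mxE mulrBr mulrBl.
  rewrite sumrB; congr (_ - _).
  rewrite -mulr_suml; set d_u := \sum_j WE u j.
  rewrite (bigD1 u) //= big1 => [|v vu]; last by rewrite eq_sym (negPf vu) mulr0n mulr0 mul0r.
  by rewrite eqxx mulr1n addr0; ring.
rewrite lapE; transitivity (\sum_u \sum_v WE u v * g 0 v ^+ 2 +
    \sum_u \sum_v (WE u v * g 0 u ^+ 2 - (g 0 u * WE u v * g 0 v) *+ 2)).
  rewrite sq_sym -big_split mulr_suml; apply: eq_bigr => u _.
  by rewrite -big_split mulr_suml; apply: eq_bigr => v _ /=; ring.
rewrite -big_split; apply: eq_bigr => u _; rewrite -big_split; apply: eq_bigr => v _ /=.
by ring.
Qed.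

Lemma energy_double (g : 'I_n.+1 -> R) :
  energy WE g * 2 = \sum_u \sum_v WE u v * (g v - g u) ^+ 2.
Proof.
pose F u v := WE u v * (g v - g u) ^+ 2.
have F_sym u v : F u v = F v u by rewrite /F (symmetric_mxE WE_sym) -opprB sqrrN.
have -> : \sum_u \sum_v F u v = \sum_(u : 'I_n.+1) \sum_(v : 'I_n.+1)
    ((if (u < v)%N then F u v else 0) + (if (v < u)%N then F u v else 0)).
  apply: eq_bigr => u _; apply: eq_bigr => v _.
  case: ltngtP => [_|_|/val_inj uv]; rewrite ?addr0 ?add0r //.
  by rewrite /F uv subrr expr0n mulr0.
under eq_bigr do rewrite big_split /=.
rewrite big_split /= mulrDr mulr1; congr (_ + _).
  by apply: eq_bigr => u _; rewrite big_mkcond.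
rewrite exchange_big; apply: eq_bigr => u _; rewrite big_mkcond.
by apply: eq_bigr => v _; rewrite F_sym.
Qed.

Lemma energy_insert0 x : energy WE (insert0 i x 0) = bform (lap_del WE i) x x.
Proof.
apply: (mulIf (lt0r_neq0 (ltr0Sn R 1))).
by rewrite energy_double bform_lap_del bform_laplacian.
Qed.

Lemma wnorm2_insert0 (wV : 'I_n.+1 -> R) x : wnorm2 wV (insert0 i x 0) = bform (wV_del wV i) x x.
Proof.
rewrite bform_sum /wnorm2 (bigD1_ord i) //= insert0_id expr0n mulr0 add0r.
apply: eq_bigr => a _; rewrite (bigD1 a) //= big1 => [|b ba]; last first.
  by rewrite !mxE eq_sym (negPf ba) mulr0n mulr0 mul0r.
by rewrite insert0_lift !mxE eqxx mulr1n addr0; ring.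
Qed.

Lemma lap_del_offdiag a b : a != b -> lap_del WE i a b = - WE (lift i a) (lift i b).
Proof. by move=> ab; rewrite !mxE (inj_eq lift_inj) (negPf ab) mulr0n sub0r. Qed.

Lemma lap_del_sym : (lap_del WE i)^T = lap_del WE i.
Proof.
apply/matrixP => a b; rewrite mxE; have [->//|ab] := eqVneq a b.
by rewrite lap_del_offdiag 1?eq_sym // lap_del_offdiag // (symmetric_mxE WE_sym).
Qed.

Lemma lap_del_connected : pos_connected (del_weights WE i) ->
  forall a b, connect [rel a b | lap_del WE i a b < 0] a b.
Proof.
move=> Gi_conn a b; apply: connect_sub (Gi_conn a b) => c e /= We_pos.
have [->|ce] := eqVneq c e; first exact: connect0.
by apply: connect1; rewrite /= lap_del_offdiag // oppr_lt0.
Qed.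

Lemma lap_del_posdef : pos_connected (fun u v => WE u v) ->
  forall x, x != 0 -> 0 < bform (lap_del WE i) x x.
Proof.
move=> G_conn x x_nz; set g := insert0 i x.
have edge_ge0 u v : 0 <= WE u v * (g 0 v - g 0 u) ^+ 2 by rewrite mulr_ge0 ?sqr_ge0.
have row_ge0 u : 0 <= \sum_v WE u v * (g 0 v - g 0 u) ^+ 2 by rewrite sumr_ge0.
have two_q := bform_laplacian g; rewrite -bform_lap_del in two_q.
rewrite lt_def -(pmulr_lge0 _ (ltr0Sn R 1)) two_q sumr_ge0 // andbT.
apply: contra x_nz => /eqP q0.
have {}q0 : \sum_u \sum_v WE u v * (g 0 v - g 0 u) ^+ 2 = 0 by rewrite -two_q q0 mul0r.
have row0 u : \sum_v WE u v * (g 0 v - g 0 u) ^+ 2 = 0.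
  by apply: (psumr_eq0P _ q0) => // w _; exact: row_ge0.
have edge0 u v : WE u v * (g 0 v - g 0 u) ^+ 2 = 0.
  by apply: (psumr_eq0P _ (row0 u)) => // w _; exact: edge_ge0.
have zero_closed : closed (fun u v => 0 < WE u v) [pred v | g 0 v == 0].
  apply: intro_closed => [|u v /= W_pos /eqP gu0].
    by apply: sym_connect_sym => u v; rewrite (symmetric_mxE WE_sym).
  by have /eqP := edge0 u v; rewrite mulf_eq0 (gt_eqF W_pos) sqrf_eq0 subr_eq0 gu0.
apply/eqP/rowP => j; have := closed_connect zero_closed (G_conn i (lift i j)).
by rewrite !inE insert0_id eqxx insert0_lift mxE => /esym/eqP.
Qed.

Lemma is_minimizer_form (wV : 'I_n.+1 -> R) x :
  is_minimizer WE wV i (insert0 i x 0) <-> form_minimizer (lap_del WE i) (wV_del wV i) x.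
Proof.
rewrite /is_minimizer /feasible /form_minimizer wnorm2_insert0 energy_insert0 insert0_id.
split=> [[[x1 _] x_min]|[x1 x_min]]; split=> //; [move=> y y1 | move=> h [h1 hi]].
  by have := x_min (insert0 i y 0); rewrite energy_insert0 wnorm2_insert0 insert0_id; apply.
rewrite -(insert0_fun_del hi) energy_insert0; apply: x_min.
by rewrite -wnorm2_insert0 insert0_fun_del.
Qed.
End Graph.


Theorem theorem12 (R : rcfType) (n : nat) (WE : 'M[R]_n.+1) (wV : 'I_n.+1 -> R)
  (i : 'I_n.+1)
  (WE_sym : WE^T = WE)
  (WE_ge0 : forall u v, 0 <= WE u v)
  (wV_ge0 : forall u, 0 <= wV u)
  (wV_nz : exists2 u, u != i & wV u != 0)
  (G_conn : pos_connected (fun u v => WE u v))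
  (Gi_conn : pos_connected (del_weights WE i)) :
  let A := invmx (lap_del WE i) *m wV_del wV i in
  (exists lam : R,
      [/\ eigenvalue A lam,
          (forall mu, eigenvalue A mu -> mu <= lam)
        & mup lam (char_poly A) = 1%N])
  /\
  (exists g0 : 'I_n.+1 -> R,
      is_minimizer WE wV i g0 /\
      forall g, is_minimizer WE wV i g -> g = g0 \/ g = (fun u => - g0 u)).
Proof.
case: n WE wV i WE_sym WE_ge0 wV_ge0 wV_nz G_conn Gi_conn
  => [|n] WE wV i WE_sym WE_ge0 wV_ge0 [u ui wu_nz] G_conn Gi_conn A.
  by move: ui; rewrite (ord1 u) (ord1 i) eqxx.
have L_sym := lap_del_sym i WE_sym.
have L_pd := lap_del_posdef i WE_sym WE_ge0 G_conn.
have L_offdiag a b (ab : a != b) : lap_del WE i a b <= 0.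
  by rewrite lap_del_offdiag // oppr_le0.
have L_conn := lap_del_connected Gi_conn.
have w_pos : exists j, 0 < wV (lift i j).
  rewrite eq_sym in ui; have [j uj _] := unlift_some ui.
  by exists j; rewrite -uj lt_def wu_nz wV_ge0.
have [lam [t0 [lam_gt0 t0_nz t0_eig rayleigh]]] :=
  generalized_top_eigenvector L_sym L_pd (fun j => wV_ge0 (lift i j)) w_pos.
split.
  exists lam.
  exact: (top_eigenvalue_simple L_sym L_pd lam_gt0 rayleigh L_offdiag L_conn t0_nz t0_eig).
have [x0 [x0_min x0_unique]] :=
  form_minimizer_unique L_sym L_pd lam_gt0 rayleigh L_offdiag L_conn t0_nz t0_eig.
exists (insert0 i x0 0); split; first exact/(is_minimizer_form _ WE_sym).
move=> g g_min; have gi0 : g i = 0 by case: g_min => [[]].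
move: g_min; rewrite -(insert0_fun_del gi0) (is_minimizer_form _ WE_sym).
case/x0_unique => ->; [by left | right].
by apply: functional_extensionality => v; rewrite insert0N mxE.
Qed.
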